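(* Let $X$ be a connected graph and let the Hamiltonian $M$ be one of $A$, $L$, $Q$. Let $a\neq b$ be vertices of $X$, let $s\in\mathbb{C}\setminus\{0\}$, and let $\mathbf u=\mathbf e_a+s\mathbf e_b$. If $\mathbf u$ is a fixed state (an eigenvector of $M$), then $|\Phi_{\mathbf u}|=1$. Otherwise $$|\Phi_{\mathbf u}|\ \ge\ \left\lceil \frac{\operatorname{dist}(a,b)}{2}\right\rceil ,$$ where $\operatorname{dist}(a,b)$ is the graph distance between $a$ and $b$.
   Context: Graphs are simple, undirected, unweighted and connected. $A$ is the adjacency matrix, $L=D-A$ the Laplacian and $Q=D+A$ the signless Laplacian, where $D$ is the diagonal degree matrix. For a real symmetric matrix $M$ with spectral decomposition $M=\sum_{\lambda\in\operatorname{spec}(M)}\lambda E_\lambda$ ($E_\lambda$ the orthogonal projection onto the $\lambda$-eigenspace), the eigenvalue support of a vector $\mathbf v$ is $\Phi_{\mathbf v}=\{\lambda: E_\lambda\mathbf v\neq \mathbf 0\}$. $\mathbf e_v$ denotes the standard basis vector of vertex $v$. *)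

From HB Require Import structures.
From mathcomp Require Import all_boot all_order all_algebra.
From mathcomp Require Import complex.
Set Implicit Arguments. Unset Strict Implicit. Unset Printing Implicit Defensive.
Import Order.TTheory GRing.Theory Num.Theory.
Local Open Scope ring_scope.

Definition simple_graph (n : nat) (e : rel 'I_n) : Prop :=
  symmetric e /\ irreflexive e.

Definition connected_graph (n : nat) (e : rel 'I_n) : Prop :=
  forall x y : 'I_n, connect e x y.

(* graph distance: least k such that there is a walk of k edges from a to b
   (returns n if b is unreachable from a; irrelevant for connected graphs) *)
Definition gdist (n : nat) (e : rel 'I_n) (a b : 'I_n) : nat :=
  find (fun k => [exists p : k.-tuple 'I_n, path e a p && (last a p == b)])
       (iota 0 n).

Section Mats.
Variable (R : rcfType) (n : nat) (e : rel 'I_n).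
Local Notation C := R[i].

Definition deg (i : 'I_n) : nat := #|[set j | e i j]|.

Definition adjM : 'M[C]_n := \matrix_(i, j) (e i j)%:R.
Definition degM : 'M[C]_n := \matrix_(i, j) ((i == j)%:R * (deg i)%:R).
Definition lapM : 'M[C]_n := degM - adjM.
Definition slapM : 'M[C]_n := degM + adjM.
End Mats.

Inductive hamiltonian := HA | HL | HQ.

Definition hamM (R : rcfType) (n : nat) (e : rel 'I_n) (h : hamiltonian)
  : 'M[R[i]]_n :=
  match h with HA => adjM R e | HL => lapM R e | HQ => slapM R e end.

Definition evec (R : rcfType) (n : nat) (v : 'I_n) : 'rV[R[i]]_n :=
  \row_j (j == v)%:R.

Definition adjointmx (R : rcfType) (n : nat) (E : 'M[R[i]]_n) : 'M[R[i]]_n :=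
  (map_mx Num.conj E)^T.

(* E is the orthogonal projection onto the row space of S
   (vectors are row vectors acting by right multiplication) *)
Definition is_orth_proj (R : rcfType) (n : nat) (E S : 'M[R[i]]_n) : Prop :=
  E *m E = E /\ adjointmx E = E /\ (E == S)%MS.

Definition in_eig_support (R : rcfType) (n : nat) (M : 'M[R[i]]_n)
  (u : 'rV[R[i]]_n) (lam : R[i]) : Prop :=
  eigenvalue M lam /\
  exists E : 'M[R[i]]_n, is_orth_proj E (eigenspace M lam) /\ u *m E != 0.

Definition eig_support_card (R : rcfType) (n : nat) (M : 'M[R[i]]_n)
  (u : 'rV[R[i]]_n) (k : nat) : Prop :=
  exists s : seq R[i], [/\ uniq s, size s = k &
    forall lam, lam \in s <-> in_eig_support M u lam].

Definition fixed_state (R : rcfType) (n : nat) (M : 'M[R[i]]_n)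
  (u : 'rV[R[i]]_n) : Prop :=
  u != 0 /\ exists lam : R[i], u *m M = lam *: u.

From HB Require Import structures.
From mathcomp Require Import all_boot all_order all_algebra.
From mathcomp Require Import complex spectral ring zify.
Set Implicit Arguments. Unset Strict Implicit. Unset Printing Implicit Defensive.
Import Order.TTheory GRing.Theory Num.Theory.

(* Let k be the size of the eigenvalue support of u.  Since u lies in the sum
   of the eigenspaces it meets, u p(M) = 0 for p(t) = prod_{lam in Phi_u} (t - lam),
   a monic polynomial of degree k.  Off the diagonal M is +-1 times the adjacency
   matrix, so at any vertex v at distance >= k from both a and b the entry
   (u p(M))_v only sees the leading term (u M^k)_v.  If dist(a, b) > 2k, a vertex v
   with dist(a, v) = k is at distance > k from b, hence
   0 = (u p(M))_v = (e_a M^k)_v = +-(number of walks of length k from a to v) <> 0. *)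

Section Balls.
Variables (n : nat) (e : rel 'I_n).

Fixpoint ball (x : 'I_n) (j : nat) : {set 'I_n} :=
  if j is j'.+1 then ball x j' :|: [set v | [exists w in ball x j', e w v]]
  else [set x].

Definition ball_lt (x : 'I_n) (j : nat) : {set 'I_n} :=
  if j is j'.+1 then ball x j' else set0.

Lemma ball_edge x j w v : w \in ball x j -> e w v -> v \in ball x j.+1.
Proof.
by move=> Hw Hwv; rewrite /= !inE; apply/orP; right; apply/existsP; exists w; rewrite Hw.
Qed.

Lemma ballP x j v :
  v \in ball x j <-> exists p, [/\ (size p <= j)%N, path e x p & last x p = v].
Proof.
elim: j v => [|j IH] v.
  split; first by rewrite inE => /eqP ->; exists [::].
  by case=> [[|y p]] [Hs _ /= Hl] //; rewrite inE -Hl.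
split.
- rewrite /= inE => /orP [/IH [p [Hs Hp Hl]]|]; first by exists p; split => //; apply: leqW.
  rewrite inE => /existsP [w /andP [/IH [p [Hs Hp Hl]] Hwv]].
  by exists (rcons p v); rewrite size_rcons rcons_path last_rcons Hl Hp Hwv.
- case=> p [Hs Hp Hl]; case/lastP: p Hs Hp Hl => [|q y] Hs Hp Hl.
    by rewrite /= inE; apply/orP; left; apply/IH; exists [::].
  rewrite size_rcons ltnS in Hs; rewrite last_rcons in Hl; subst y.
  move: Hp; rewrite rcons_path => /andP [Hq Hqv].
  by apply: (ball_edge _ Hqv); apply/IH; exists q.
Qed.

Lemma subset_ball x i j : (i <= j)%N -> ball x i \subset ball x j.
Proof.
move=> Hij; apply/subsetP => v /ballP [p [Hs Hp Hl]]; apply/ballP.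
by exists p; split => //; apply: leq_trans Hij.
Qed.

Lemma ball_ltW x j : ball_lt x j \subset ball x j.
Proof. by case: j => [|j]; [apply: sub0set | apply: subset_ball]. Qed.

Lemma notin_ball_lt x j v : v \notin ball x j -> v \notin ball_lt x j.
Proof. exact/contraNN/subsetP/ball_ltW. Qed.

Lemma edge_notin_ball_lt x j w v :
  v \notin ball x j -> e w v -> w \notin ball_lt x j.
Proof.
case: j => [|j] Hv Hwv; first by rewrite in_set0.
by apply: contraNN Hv => Hw; apply: ball_edge Hw Hwv.
Qed.

Lemma ball_sym x j v : symmetric e -> v \in ball x j -> x \in ball v j.
Proof.
move=> esym /ballP [p [Hs Hp Hl]]; apply/ballP; exists (rev (belast x p)).
rewrite size_rev size_belast; split => //.
  by rewrite -Hl rev_path; apply: sub_path Hp => y z; rewrite esym.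
by case: p {Hs Hp} Hl => [|y q] //= Hl; rewrite rev_cons last_rcons.
Qed.

Lemma ball_trans x v w i j :
  v \in ball x i -> w \in ball v j -> w \in ball x (i + j).
Proof.
move=> /ballP [p [Hs Hp Hl]] /ballP [q [Hs' Hq Hl']]; apply/ballP.
exists (p ++ q); rewrite size_cat cat_path last_cat Hl Hp Hq; split => //.
exact: leq_add.
Qed.

Lemma gdist_le x y k : y \in ball x k -> (gdist e x y <= k)%N.
Proof.
move=> /ballP [p [Hs Hp Hl]]; apply: leq_trans Hs.
have [Hn|Hn] := ltnP (size p) n; last first.
  by apply: leq_trans (find_size _ _) _; rewrite size_iota.
rewrite leqNgt; apply/negP => /(before_find 0%N).
rewrite nth_iota // add0n => /negbT/negP; apply.
by apply/existsP; exists (in_tuple p); rewrite Hp Hl eqxx.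
Qed.

Lemma ball_stable x j :
  ball x j.+1 \subset ball x j -> forall k, ball x (j + k) \subset ball x j.
Proof.
move=> Hsub; elim=> [|k IH]; first by rewrite addn0.
apply/subsetP => v; rewrite addnS /= inE => /orP [Hv|]; first exact: (subsetP IH).
rewrite inE => /existsP [w /andP [Hw Hwv]].
exact: (subsetP Hsub) (ball_edge (subsetP IH _ Hw) Hwv).
Qed.

Lemma sphere_nonempty x y j : connect e x y -> (j <= gdist e x y)%N ->
  exists2 v, v \in ball x j & v \notin ball_lt x j.
Proof.
case/connectP => p Hp Hl; case: j => [_|j Hj]; first by exists x; rewrite /= ?inE.
suff /subsetPn [v Hv1 Hv2] : ~~ (ball x j.+1 \subset ball x j) by exists v.
apply/negP => /ball_stable/(_ (size p)) Hst.
have Hy : y \in ball x j by apply: (subsetP Hst); apply/ballP; exists p; rewrite leq_addl Hl.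
by move: (gdist_le Hy); rewrite leqNgt Hj.
Qed.

End Balls.

Local Open Scope ring_scope.

Section Walks.
Variables (R : rcfType) (n : nat) (e : rel 'I_n) (M : 'M[R[i]]_n) (sg : R[i]).
Hypothesis sg2 : sg * sg = 1.
Hypothesis M_nonadj : forall i j, i != j -> ~~ e i j -> M i j = 0.
Hypothesis M_adj : forall i j, i != j -> e i j -> M i j = sg.

Lemma walk_out_ball x j v : v \notin ball e x j -> (evec R x *m M ^+ j) 0 v = 0.
Proof.
elim: j v => [|j IH] v Hv.
  by rewrite expr0 mulmx1 mxE; move: Hv; rewrite /= inE => /negbTE ->.
rewrite exprSr mulmxA mxE big1 // => w _.
have [Hw|Hw] := boolP (w \in ball e x j); last by rewrite IH // mul0r.
rewrite M_nonadj ?mulr0 //.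
  by apply: contraNneq Hv => <-; apply: (subsetP (subset_ball _ _ (leqnSn j))).
by apply: contraNN Hv; apply: ball_edge.
Qed.

(* Off the diagonal [sg M] is the adjacency matrix, so [sg^j (e_x M^j)_v] counts
   the walks of length [j] from [x] to [v] as long as none of them can use a
   diagonal entry, i.e. when [dist(x, v) >= j]. *)
Lemma signed_walk_ge0 x j v : v \notin ball_lt e x j ->
  0 <= sg ^+ j * (evec R x *m M ^+ j) 0 v /\
  (v \in ball e x j -> 0 < sg ^+ j * (evec R x *m M ^+ j) 0 v).
Proof.
elim: j v => [|j IH] v Hv.
  by rewrite expr0 mul1r mulmx1 mxE inE; case: (v == x); rewrite ?ler01 ?ltr01.
pose T w := sg ^+ j * (evec R x *m M ^+ j) 0 w * (sg * M w v).
have ET : sg ^+ j.+1 * (evec R x *m M ^+ j.+1) 0 v = \sum_w T w.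
  rewrite [M ^+ _]exprSr mulmxA mxE mulr_sumr exprS.
  by apply: eq_bigr => w _; rewrite /T; ring.
have T_ge0 w : 0 <= T w.
  have [->|ne] := eqVneq w v; first by rewrite /T walk_out_ball // mulr0 mul0r.
  have [Hwv|Hwv] := boolP (e w v); last by rewrite /T M_nonadj // !mulr0.
  by rewrite /T M_adj // sg2 mulr1; apply: (IH w (edge_notin_ball_lt Hv Hwv)).1.
rewrite ET; split; first exact: sumr_ge0.
rewrite /= inE (negbTE Hv) inE => /existsP [w /andP [Hw Hwv]].
rewrite (bigD1 w) //=; apply: ltr_wpDr; first exact: sumr_ge0.
have ne : w != v by apply: contraNneq Hv => <-.
by rewrite /T M_adj // sg2 mulr1; apply: (IH w (edge_notin_ball_lt Hv Hwv)).2.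
Qed.

Variables (a b : 'I_n) (s : R[i]).
Let u := evec R a + s *: evec R b.

Lemma walk_far_from_b j v :
  v \notin ball e b j -> (u *m M ^+ j) 0 v = (evec R a *m M ^+ j) 0 v.
Proof.
move=> Hvb; rewrite mulmxDl -scalemxAl mxE [X in _ + X]mxE.
by rewrite (walk_out_ball Hvb) mulr0 addr0.
Qed.

Definition agrees_far (x : 'rV[R[i]]_n) j := forall v,
  v \notin ball_lt e a j -> v \notin ball_lt e b j -> x 0 v = (u *m M ^+ j) 0 v.

Lemma agrees_far_step x j l :
  agrees_far x j -> agrees_far (x *m (M - l%:M)) j.+1.
Proof.
move=> Hx v Hva Hvb.
have Hxv : x 0 v = 0 by rewrite Hx ?notin_ball_lt // walk_far_from_b // walk_out_ball.
rewrite mulmxBr mul_mx_scalar exprSr mulmxA !mxE Hxv mulr0 subr0.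
apply: eq_bigr => w _.
have [->|ne] := eqVneq w v; first by rewrite Hx ?notin_ball_lt.
have [Hwv|Hwv] := boolP (e w v); last by rewrite M_nonadj // !mulr0.
by rewrite Hx // ?(edge_notin_ball_lt Hva Hwv) ?(edge_notin_ball_lt Hvb Hwv).
Qed.

Lemma agrees_far_prod x j (t : seq R[i]) : agrees_far x j ->
  agrees_far (x *m \prod_(l <- t) (M - l%:M)) (j + size t).
Proof.
elim: t x j => [|l t IH] x j Hx; first by rewrite big_nil mulmx1 addn0.
rewrite big_cons -mulmxE mulmxA /= addnS -addSn.
exact/IH/agrees_far_step.
Qed.

End Walks.

Lemma adjointmxM (R : rcfType) n (X Y : 'M[R[i]]_n) :
  adjointmx (X *m Y) = adjointmx Y *m adjointmx X.
Proof. by rewrite /adjointmx map_mxM trmx_mul. Qed.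

Lemma adjointmxK (R : rcfType) n (X : 'M[R[i]]_n) : adjointmx (adjointmx X) = X.
Proof. by apply/matrixP => i j; rewrite !mxE conjCK. Qed.

Lemma adjointmx_diag (R : rcfType) n (r : 'rV[R[i]]_n) :
  (forall i, (r 0 i)^* = r 0 i) -> adjointmx (diag_mx r) = diag_mx r.
Proof.
move=> Hr; apply/matrixP => i j; rewrite !mxE.
by have [->|ne] := eqVneq i j; rewrite ?eqxx ?mulr1n ?Hr // !mulr0n conjC0.
Qed.

Lemma orth_proj_uniq (R : rcfType) n (E F S : 'M[R[i]]_n) :
  is_orth_proj E S -> is_orth_proj F S -> E = F.
Proof.
move=> [E2 [Eadj ES]] [F2 [Fadj FS]].
have FE : F *m E = F.
  have : (F <= E)%MS by rewrite (eqmxP FS) -(eqmxP ES) submx_refl.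
  by case/submxP => D ->; rewrite -mulmxA E2.
have EF : E *m F = E.
  have : (E <= F)%MS by rewrite (eqmxP ES) -(eqmxP FS) submx_refl.
  by case/submxP => D ->; rewrite -mulmxA F2.
by rewrite -Eadj -EF adjointmxM Eadj Fadj FE.
Qed.

Section HermitianSpectrum.
Variables (R : rcfType) (n : nat) (M : 'M[R[i]]_n).
Hypothesis M_herm : adjointmx M = M.

Let P := spectralmx M.
Let Q := adjointmx P.
Let d := spectral_diag M.

(* The rows of [P] form an orthonormal eigenbasis of [M] (eigenvalues [d]), and
   [u *m Q] is the coordinate vector of [u] in that basis. *)

Lemma mulPQ : P *m Q = 1%:M.
Proof. by rewrite /Q /adjointmx map_trmx; apply/unitarymxP/spectral_unitarymx. Qed.

Lemma mulQP : Q *m P = 1%:M.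
Proof.
rewrite /Q /adjointmx map_trmx -invmx_unitary ?spectral_unitarymx //.
by rewrite mulVmx ?spectral_unit.
Qed.

Lemma spectral_decomposition : M = Q *m diag_mx d *m P.
Proof.
have M_normal : M \is normalmx.
  by apply/normalmxP; rewrite -map_trmx -/(adjointmx M) M_herm.
have -> : Q = invmx P by rewrite invmx_unitary ?spectral_unitarymx // /Q /adjointmx map_trmx.
exact/orthomx_spectralP.
Qed.

Lemma mulmxP_inj m (X Y : 'M[R[i]]_(m, n)) : X *m P = Y *m P -> X = Y.
Proof. by move=> /(congr1 (mulmx^~ Q)); rewrite -!mulmxA mulPQ !mulmx1. Qed.

Lemma mulmxM m (X : 'M[R[i]]_(m, n)) : X *m M = X *m Q *m diag_mx d *m P.
Proof. by rewrite {1}spectral_decomposition !mulmxA. Qed.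

Lemma eigen_coordP m (X : 'M[R[i]]_(m, n)) lam :
  X *m M = lam *: X <-> forall r i, (X *m Q) r i * d 0 i = lam * (X *m Q) r i.
Proof.
have XE : X = X *m Q *m P by rewrite -mulmxA mulQP mulmx1.
rewrite mulmxM {2}XE scalemxAl; split => [/mulmxP_inj XQ r i | XQ].
  by move/matrixP: XQ => /(_ r i); rewrite mul_mx_diag !mxE.
by congr (_ *m _); apply/matrixP => r i; rewrite mul_mx_diag [LHS]mxE [RHS]mxE XQ.
Qed.

Lemma mulmx_shift_coord (c : 'rV[R[i]]_n) l :
  c *m P *m (M - l%:M) = (\row_i (c 0 i * (d 0 i - l))) *m P.
Proof.
rewrite mulmxBr mul_mx_scalar mulmxM -(mulmxA c P) mulPQ mulmx1 scalemxAl -mulmxBl.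
by congr (_ *m _); apply/rowP => i; rewrite mul_mx_diag !mxE mulrBr [l * _]mulrC.
Qed.

Lemma mulmx_prod_shift_coord (c : 'rV[R[i]]_n) (t : seq R[i]) :
  c *m P *m \prod_(l <- t) (M - l%:M) =
  (\row_i (c 0 i * \prod_(l <- t) (d 0 i - l))) *m P.
Proof.
elim: t c => [|l t IH] c.
  by rewrite big_nil mulmx1; congr (_ *m _); apply/rowP => i; rewrite mxE big_nil mulr1.
rewrite big_cons -mulmxE mulmxA mulmx_shift_coord IH; congr (_ *m _).
by apply/rowP => i; rewrite !mxE big_cons mulrA.
Qed.

Definition eigproj lam := Q *m diag_mx (\row_i (d 0 i == lam)%:R) *m P.

Lemma eigproj_orth lam : is_orth_proj (eigproj lam) (eigenspace M lam).
Proof.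
split; [|split].
- rewrite /eigproj -!mulmxA (mulmxA P) mulPQ mul1mx (mulmxA (diag_mx _)) mulmx_diag.
  congr (_ *m (_ *m _)); congr diag_mx; apply/rowP => i; rewrite !mxE.
  by case: (_ == _); rewrite ?mulr1 ?mulr0.
- rewrite /eigproj !adjointmxM adjointmxK mulmxA adjointmx_diag //.
  by move=> i; rewrite mxE; case: (_ == _); rewrite ?conjC1 ?conjC0.
apply/andP; split.
  apply/eigenspaceP/eigen_coordP => r i.
  rewrite /eigproj -mulmxA mulPQ mulmx1 mul_mx_diag !mxE.
  by case: eqVneq => [->|]; rewrite ?mulr1 ?mulr0 ?mul0r // mulrC.
set K := eigenspace M lam.
have /eigen_coordP HK : K *m M = lam *: K by apply/eigenspaceP.
suff -> : K = K *m eigproj lam by apply: submxMl.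
rewrite /eigproj !mulmxA -[LHS]mulmx1 -mulQP mulmxA; congr (_ *m _).
apply/matrixP => r i; rewrite mul_mx_diag [RHS]mxE [X in _ * X]mxE.
have [_|ne] := eqVneq (d 0 i) lam; first by rewrite mulr1.
rewrite mulr0; move/eqP: (HK r i).
by rewrite -subr_eq0 [lam * _]mulrC -mulrBr mulf_eq0 subr_eq0 (negbTE ne) orbF => /eqP.
Qed.

Lemma mul_eigproj_neq0 (u : 'rV[R[i]]_n) lam :
  u *m eigproj lam != 0 <-> exists i, (u *m Q) 0 i != 0 /\ d 0 i = lam.
Proof.
have -> : u *m eigproj lam = (\row_i ((u *m Q) 0 i * (d 0 i == lam)%:R)) *m P.
  by rewrite /eigproj !mulmxA; congr (_ *m _); apply/rowP => i; rewrite mul_mx_diag !mxE.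
have mulP_eq0 (c : 'rV[R[i]]_n) : (c *m P == 0) = (c == 0).
  apply/eqP/eqP => [|->]; last by rewrite mul0mx.
  by move=> cP0; apply: mulmxP_inj; rewrite cP0 mul0mx.
rewrite mulP_eq0; split => [|[i [ui <-]]]; last first.
  by apply/rV0Pn; exists i; rewrite mxE eqxx mulr1.
case/rV0Pn => i; rewrite mxE.
have [<-|_] := eqVneq (d 0 i) lam; last by rewrite mulr0 eqxx.
by rewrite mulr1 => ui; exists i.
Qed.

Lemma eigenvalue_spectral_diag i : eigenvalue M (d 0 i).
Proof.
apply/eigenvalueP; exists (delta_mx 0 i *m P).
  apply/eigen_coordP => r j; rewrite -mulmxA mulPQ mulmx1 !mxE.
  by have [->|] := eqVneq j i; rewrite ?andbT ?andbF ?mul0r ?mulr0 // mulrC.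
apply/negP => /eqP/(congr1 (mulmx^~ Q)); rewrite mul0mx -mulmxA mulPQ mulmx1.
by move/matrixP => /(_ 0 i) /eqP; rewrite !mxE !eqxx oner_eq0.
Qed.

Lemma in_eig_supportP u lam :
  in_eig_support M u lam <-> exists i, (u *m Q) 0 i != 0 /\ d 0 i = lam.
Proof.
split => [[_ [E [E_orth uE]]] | [i [ui di]]].
  by apply/mul_eigproj_neq0; rewrite -(orth_proj_uniq E_orth (eigproj_orth lam)).
split; first by rewrite -di eigenvalue_spectral_diag.
by exists (eigproj lam); split; [exact: eigproj_orth | apply/mul_eigproj_neq0; exists i].
Qed.

Definition eig_support_seq (u : 'rV[R[i]]_n) :=
  undup [seq d 0 i | i <- enum 'I_n & (u *m Q) 0 i != 0].

Lemma mem_eig_support_seq u lam :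
  lam \in eig_support_seq u <-> in_eig_support M u lam.
Proof.
rewrite in_eig_supportP mem_undup; split => [|[i [ui <-]]].
  by case/mapP => i; rewrite mem_filter mem_enum andbT => ui ->; exists i.
by apply: map_f; rewrite mem_filter mem_enum andbT.
Qed.

Lemma eig_support_card_size u : eig_support_card M u (size (eig_support_seq u)).
Proof.
exists (eig_support_seq u); split => //; first exact: undup_uniq.
by move=> lam; apply: mem_eig_support_seq.
Qed.

Lemma fixed_state_support_size u :
  fixed_state M u -> size (eig_support_seq u) = 1%N.
Proof.
move=> [u0 [lam /eigen_coordP ulam]].
have support_lam mu : mu \in eig_support_seq u -> mu = lam.
  move=> /mem_eig_support_seq/in_eig_supportP [i [ui <-]]; move/eqP: (ulam 0 i).
  by rewrite -subr_eq0 [lam * _]mulrC -mulrBr mulf_eq0 (negbTE ui) subr_eq0 => /eqP.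
have [i ui] : exists i, (u *m Q) 0 i != 0.
  apply/rV0Pn; apply: contraNneq u0 => uQ0.
  by rewrite -[u]mulmx1 -mulQP mulmxA uQ0 mul0mx.
have di_in : d 0 i \in eig_support_seq u.
  by apply/mem_eig_support_seq/in_eig_supportP; exists i.
apply/eqP; rewrite eqn_leq -has_predT; apply/andP; split; last by apply/hasP; exists (d 0 i).
apply: (uniq_leq_size (s2 := [:: lam])); first exact: undup_uniq.
by move=> mu /support_lam ->; apply: mem_head.
Qed.

Lemma eig_support_annihilates u :
  u *m \prod_(l <- eig_support_seq u) (M - l%:M) = 0.
Proof.
have uE : u = u *m Q *m P by rewrite -mulmxA mulQP mulmx1.
rewrite {1}uE mulmx_prod_shift_coord -(mul0mx _ P); congr (_ *m _).
apply/rowP => i; rewrite mxE [RHS]mxE.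
have [->|ui] := eqVneq ((u *m Q) 0 i) 0; first by rewrite mul0r.
rewrite (big_rem (d 0 i)) /= ?subrr ?mul0r ?mulr0 //.
by apply/mem_eig_support_seq/in_eig_supportP; exists i.
Qed.

End HermitianSpectrum.

Section Hamiltonians.
Variables (R : rcfType) (n : nat) (e : rel 'I_n) (h : hamiltonian).
Local Notation M := (hamM R e h).

(* Off the diagonal, [L = -A] while [A] and [Q] agree with the adjacency matrix. *)
Definition ham_sign : R[i] := if h is HL then -1 else 1.

Lemma ham_sign_sqr : ham_sign * ham_sign = 1.
Proof. by rewrite /ham_sign; case: h; rewrite ?mulrNN mulr1. Qed.

Lemma hamM_offdiag i j : i != j -> M i j = ham_sign * (e i j)%:R.
Proof.
move=> ne; rewrite /ham_sign; case: h => /=; rewrite !mxE ?(negbTE ne) /= ?mul0r ?mul1r //.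
  by rewrite sub0r mulN1r.
by rewrite add0r.
Qed.

Lemma hamM_nonadj i j : i != j -> ~~ e i j -> M i j = 0.
Proof. by move=> ne nadj; rewrite hamM_offdiag // (negbTE nadj) mulr0. Qed.

Lemma hamM_adj i j : i != j -> e i j -> M i j = ham_sign.
Proof. by move=> ne adj; rewrite hamM_offdiag // adj mulr1. Qed.

Lemma hamM_herm : symmetric e -> adjointmx M = M.
Proof.
move=> esym; apply/matrixP => i j; rewrite /adjointmx mxE [map_mx _ _ _ _]mxE.
have [->|ne] := eqVneq i j.
  by case: h => /=; rewrite !mxE ?rmorphB ?rmorphD ?rmorphM !rmorph_nat.
rewrite !hamM_offdiag // 1?eq_sym // esym rmorphM rmorph_nat /ham_sign.
by case: h; rewrite ?rmorphN rmorph1.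
Qed.

End Hamiltonians.

Unset Implicit Arguments.

Theorem mainTheorem1 (R : rcfType) (n : nat) (e : rel 'I_n)
  (h : hamiltonian) (a b : 'I_n) (s : R[i]) :
  simple_graph e -> connected_graph e ->
  a != b -> s != 0 ->
  let u := evec R a + s *: evec R b in
  (fixed_state (hamM R e h) u -> eig_support_card (hamM R e h) u 1) /\
  (~ fixed_state (hamM R e h) u ->
     exists k : nat, eig_support_card (hamM R e h) u k /\
       uphalf (gdist e a b) <= k)%N.
Proof.
move=> [esym _] e_conn _ _ u; set M := hamM R e h.
have M_herm : adjointmx M = M := hamM_herm R h esym.
split=> [u_fixed|_].
  by rewrite -(fixed_state_support_size M_herm u_fixed); apply: eig_support_card_size.
set k := size (eig_support_seq M u).
exists k; split; first exact: eig_support_card_size.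
set dab := gdist e a b; rewrite leqNgt; apply/negP => k_lt.
have far : (k + k < dab)%N.
  by move: k_lt; have := odd_double_half dab; rewrite uphalf_half -muln2; case: odd => /=; lia.
have [v v_in v_out] : exists2 v, v \in ball e a k & v \notin ball_lt e a k.
  by apply: sphere_nonempty (e_conn a b) _; lia.
have vb_out : v \notin ball e b k.
  by apply: contraL far => /(ball_sym esym)/(ball_trans v_in)/gdist_le; rewrite -/dab -leqNgt.
have agree0 : agrees_far e M a b s u 0 by move=> w _ _; rewrite expr0 mulmx1.
have M_nonadj := @hamM_nonadj R n e h.
have := agrees_far_prod M_nonadj (t := eig_support_seq M u) agree0 v_out.
rewrite add0n -/k eig_support_annihilates // mxE (walk_far_from_b M_nonadj) //.
move=> /(_ (notin_ball_lt vb_out)) walk0.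
have := (signed_walk_ge0 (ham_sign_sqr R h) M_nonadj (@hamM_adj R n e h) v_out).2 v_in.
by rewrite -walk0 mulr0 ltxx.
Qed.
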